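(* Let $\psi=\begin{bmatrix}\psi_R\\ \psi_I\end{bmatrix}$ with arbitrary $\psi_R,\psi_I\in\mathbb{R}^{N}$, $N=(n_x+1)(n_y+1)(n_z+1)$. For each $1\le i\le n_x$, $1\le j\le n_y$, $1\le k\le n_z$, let $\mathbf{P}_{ijk}$ be the $16\times16$ matrix $\mathbf{P}$ defined (as in the context) for the single-cell region $n_x=n_y=n_z=1$ formed by the primary cell with corners $(i,j,k)$ and $(i+1,j+1,k+1)$, with the same $\hbar,m,\Delta x,\Delta y,\Delta z,\Delta t$ and with potential values $U_{i+a,j+b,k+c}$ ($a,b,c\in\{0,1\}$) at its local node $(a+1,b+1,c+1)$; and let $\psi_{ijk}\in\mathbb{R}^{16}$ be the vector formed by the entries of $\psi_R$ and then of $\psi_I$ at the eight corner nodes of that cell, ordered by the local node ordering. Then $$\psi^T\mathbf{P}\psi=\sum_{i=1}^{n_x}\sum_{j=1}^{n_y}\sum_{k=1}^{n_z}\psi_{ijk}^T\mathbf{P}_{ijk}\psi_{ijk}.$$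
   Context: Fix constants $\hbar>0$, $m>0$, cell sizes $\Delta x,\Delta y,\Delta z>0$, a time step $\Delta t>0$ and positive integers $n_x,n_y,n_z$. A region is a box of $n_x\times n_y\times n_z$ primary cells of size $\Delta x\times\Delta y\times\Delta z$ with primary nodes $(i,j,k)$, $1\le i\le n_x+1$, $1\le j\le n_y+1$, $1\le k\le n_z+1$. Let $N=(n_x+1)(n_y+1)(n_z+1)$; node-indexed vectors use the ordering $i+(j-1)(n_x+1)+(k-1)(n_x+1)(n_y+1)$. Real potential values $U_{i,j,k}$ are given at the nodes; $D_U$ is the $N\times N$ diagonal matrix containing them. Let $I_p$ be the $p\times p$ identity, $\tilde I_p=\mathrm{diag}(\tfrac12,1,\dots,1,\tfrac12)$ ($p\times p$; for $p=2$, $\tilde I_2=\tfrac12 I_2$), $W_p=[0_{p\times1}\ I_p]-[I_p\ 0_{p\times 1}]$ ($p\times(p+1)$), $\otimes$ the Kronecker product. For a region define $D_V''=\Delta x\Delta y\Delta z\,\tilde I_{n_z+1}\otimes\tilde I_{n_y+1}\otimes\tilde I_{n_x+1}$; $D=[D_x\ D_y\ D_z]$ with $D_x=-I_{n_z+1}\otimes I_{n_y+1}\otimes W_{n_x}^T$, $D_y=-I_{n_z+1}\otimes W_{n_y}^T\otimes I_{n_x+1}$, $D_z=-W_{n_z}^T\otimes I_{n_y+1}\otimes I_{n_x+1}$; $D_S''=\mathrm{diag}(\Delta y\Delta z\,\tilde I_{n_z+1}\otimes\tilde I_{n_y+1}\otimes I_{n_x},\ \Delta x\Delta z\,\tilde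 I_{n_z+1}\otimes I_{n_y}\otimes\tilde I_{n_x+1},\ \Delta x\Delta y\,I_{n_z}\otimes\tilde I_{n_y+1}\otimes\tilde I_{n_x+1})$; $D_l'=\mathrm{diag}(\Delta x\, I_{n_x(n_y+1)(n_z+1)},\ \Delta y\, I_{(n_x+1)n_y(n_z+1)},\ \Delta z\, I_{(n_x+1)(n_y+1)n_z})$; $H=\frac{\hbar^2}{2m}D D_S''(D_l')^{-1}D^T+D_V''D_U$; $\mathbf{P}=\begin{bmatrix}D_V''&-\frac{\Delta t}{2\hbar}H\\-\frac{\Delta t}{2\hbar}H&D_V''\end{bmatrix}$. *)

(* Kronecker product: tensmx (notation A *t B) from
   mathcomp-real-closed's mxtens.v, with row index of A *t B equal to
   i_A * rows(B) + i_B (rightmost factor varies fastest). *)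
From HB Require Import structures.
From mathcomp Require Import all_boot all_order all_algebra.
From mathcomp Require Import mxtens zify.
Set Implicit Arguments. Unset Strict Implicit. Unset Printing Implicit Defensive.
Import Order.TTheory GRing.Theory Num.Theory.
Local Open Scope ring_scope.

Section Defs.
Variable R : realFieldType.

Definition Nn (nx ny nz : nat) : nat := (nz.+1 * (ny.+1 * nx.+1))%N.

(* 0-based node (i,j,k) -> 0-based position i + j(nx+1) + k(nx+1)(ny+1)
   (the paper's ordering i+(j-1)(nx+1)+(k-1)(nx+1)(ny+1), 1-based) *)
Definition node {nx ny nz : nat} (i : 'I_nx.+1) (j : 'I_ny.+1) (k : 'I_nz.+1)
  : 'I_(Nn nx ny nz) := mxtens_index (k, mxtens_index (j, i)).

Definition node_x {nx ny nz} (p : 'I_(Nn nx ny nz)) : 'I_nx.+1 :=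
  (mxtens_unindex (mxtens_unindex p).2).2.
Definition node_y {nx ny nz} (p : 'I_(Nn nx ny nz)) : 'I_ny.+1 :=
  (mxtens_unindex (mxtens_unindex p).2).1.
Definition node_z {nx ny nz} (p : 'I_(Nn nx ny nz)) : 'I_nz.+1 :=
  (mxtens_unindex p).1.

(* W_p = [0_{p x 1} I_p] - [I_p 0_{p x 1}], written entrywise (0-based) *)
Definition Wm (p : nat) : 'M[R]_(p, p.+1) :=
  \matrix_(i < p, j < p.+1) (((j : nat) == i.+1)%:R - ((j : nat) == i)%:R).

Definition Itil (p : nat) : 'M[R]_p :=
  diag_mx (\row_(i < p) (if ((i : nat) == 0%N) || ((i : nat) == p.-1)
                          then 2^-1 else 1)).

Section Region.
Variables (hbar m dx dy dz dt : R) (nx ny nz : nat).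
Variable U : 'I_nx.+1 -> 'I_ny.+1 -> 'I_nz.+1 -> R.

Definition DV : 'M[R]_(Nn nx ny nz) :=
  (dx * dy * dz) *: (Itil nz.+1 *t (Itil ny.+1 *t Itil nx.+1)).

Definition DU : 'M[R]_(Nn nx ny nz) :=
  diag_mx (\row_p U (node_x p) (node_y p) (node_z p)).

Definition Dxm := - ((1%:M : 'M[R]_nz.+1) *t ((1%:M : 'M[R]_ny.+1) *t (Wm nx)^T)).
Definition Dym := - ((1%:M : 'M[R]_nz.+1) *t ((Wm ny)^T *t (1%:M : 'M[R]_nx.+1))).
Definition Dzm := - ((Wm nz)^T *t ((1%:M : 'M[R]_ny.+1) *t (1%:M : 'M[R]_nx.+1))).

Definition Dm := row_mx Dxm (row_mx Dym Dzm).

Definition DS :=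
  block_mx ((dy * dz) *: (Itil nz.+1 *t (Itil ny.+1 *t (1%:M : 'M[R]_nx)))) 0 0
  (block_mx ((dx * dz) *: (Itil nz.+1 *t ((1%:M : 'M[R]_ny) *t Itil nx.+1))) 0 0
            ((dx * dy) *: ((1%:M : 'M[R]_nz) *t (Itil ny.+1 *t Itil nx.+1)))).

Definition Dl :=
  block_mx (dx%:M : 'M[R]_(nz.+1 * (ny.+1 * nx))) 0 0
  (block_mx (dy%:M : 'M[R]_(nz.+1 * (ny * nx.+1))) 0 0
            (dz%:M : 'M[R]_(nz * (ny.+1 * nx.+1)))).

Definition Hm : 'M[R]_(Nn nx ny nz) :=
  (hbar ^+ 2 / (2 * m)) *: (Dm *m DS *m invmx Dl *m Dm^T) + DV *m DU.

Definition Pm : 'M[R]_(Nn nx ny nz + Nn nx ny nz) :=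
  block_mx DV (- (dt / (2 * hbar)) *: Hm) (- (dt / (2 * hbar)) *: Hm) DV.
End Region.

Lemma shift_ord_proof (n : nat) (i : 'I_n) (a : 'I_2) : (i + a < n.+1)%N.
Proof. case: i a => i Hi [a Ha] /=; rewrite ltnS; case: a Ha => [|[|]] //= _; lia. Qed.
Definition shift_ord (n : nat) (i : 'I_n) (a : 'I_2) : 'I_n.+1 :=
  Ordinal (shift_ord_proof i a).

Definition psi_cell {nx ny nz : nat} (psiR psiI : 'cV[R]_(Nn nx ny nz))
  (i : 'I_nx) (j : 'I_ny) (k : 'I_nz) : 'cV[R]_(Nn 1 1 1 + Nn 1 1 1) :=
  let loc (v : 'cV[R]_(Nn nx ny nz)) : 'cV[R]_(Nn 1 1 1) :=
    \col_(q < Nn 1 1 1)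
      v (node (shift_ord i (node_x q)) (shift_ord j (node_y q))
              (shift_ord k (node_z q))) 0 in
  col_mx (loc psiR) (loc psiI).

Definition U_cell {nx ny nz : nat} (U : 'I_nx.+1 -> 'I_ny.+1 -> 'I_nz.+1 -> R)
  (i : 'I_nx) (j : 'I_ny) (k : 'I_nz) : 'I_2 -> 'I_2 -> 'I_2 -> R :=
  fun a b c => U (shift_ord i a) (shift_ord j b) (shift_ord k c).
End Defs.

From mathcomp Require Import all_boot all_order all_algebra.
From mathcomp Require Import mxtens.
Set Implicit Arguments. Unset Strict Implicit. Unset Printing Implicit Defensive.
Import Order.TTheory GRing.Theory Num.Theory.
Local Open Scope ring_scope.

(* Every matrix of the scheme is an assembly [\sum_c G_c^T M_c G_c] of its
   single-cell counterparts [M_c], where [G_c] restricts node vectors to the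
   corners of cell [c].  In one dimension this holds for [W^T W] (row [i] of
   [W] only sees the two corners of cell [i]) and for the trapezoidal weights
   [tilde I] (an interior node is shared by two cells, each contributing 1/2).
   Kronecker products of assemblies are assemblies over product cells, the
   diagonal potential commutes with restriction, and assemblies are stable
   under the linear and block operations that build [H] and [P].  Finally the
   quadratic form of an assembly is the sum of the local quadratic forms of
   the restricted vectors. *)

Section MatrixFacts.
Variable R : pzRingType.

Lemma tensmx_suml (I : finType) m n p q (A : I -> 'M[R]_(m, n)) (B : 'M[R]_(p, q)) :
  (\sum_c A c) *t B = \sum_c A c *t B.
Proof.
apply/matrixP => r s; case: (mxtens_indexP r) => i k; case: (mxtens_indexP s) => j l.
by rewrite tensmxE !summxE mulr_suml; apply: eq_bigr => c _; rewrite tensmxE.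
Qed.

Lemma tensmx_sumr (I : finType) m n p q (A : 'M[R]_(m, n)) (B : I -> 'M[R]_(p, q)) :
  A *t (\sum_c B c) = \sum_c A *t B c.
Proof.
apply/matrixP => r s; case: (mxtens_indexP r) => i k; case: (mxtens_indexP s) => j l.
by rewrite tensmxE !summxE mulr_sumr; apply: eq_bigr => c _; rewrite tensmxE.
Qed.

Lemma tensmx11 m n : (1%:M : 'M[R]_m) *t (1%:M : 'M[R]_n) = 1%:M.
Proof.
apply/matrixP => r s; case: (mxtens_indexP r) => i k; case: (mxtens_indexP s) => j l.
rewrite tensmxE !mxE (inj_eq (can_inj (@mxtens_indexK _ _))) xpair_eqE.
by case: (i == j); rewrite ?mul1r ?mul0r.
Qed.

Lemma tensmx_rowsub m1 m2 n1 n2 p1 p2 (f : 'I_m2 -> 'I_m1) (g : 'I_n2 -> 'I_n1)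
    (A : 'M[R]_(m1, p1)) (B : 'M[R]_(n1, p2)) :
  rowsub f A *t rowsub g B =
  rowsub (fun r => mxtens_index (f (mxtens_unindex r).1, g (mxtens_unindex r).2)) (A *t B).
Proof.
apply/matrixP => r s; case: (mxtens_indexP r) => i k; case: (mxtens_indexP s) => j l.
by rewrite tensmxE [RHS]mxE mxtens_indexK tensmxE !mxE.
Qed.

Lemma rowsub1_mul_diag m n (f : 'I_m -> 'I_n) (d : 'rV[R]_n) :
  rowsub f 1%:M *m diag_mx d = diag_mx (colsub f d) *m rowsub f 1%:M.
Proof. by apply/matrixP => a x; rewrite mul_diag_mx mul_rowsub_mx mul1mx !mxE mulr_natr. Qed.

Lemma trmx_mul_rows m n p (A : 'M[R]_(m, n)) (B : 'M[R]_(m, p)) :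
  A^T *m B = \sum_i (row i A)^T *m row i B.
Proof.
apply/matrixP => x y; rewrite !mxE summxE; apply: eq_bigr => i _.
by rewrite !mxE big_ord1 !mxE.
Qed.

End MatrixFacts.

Lemma unitmx_scalar (R : fieldType) n (a : R) : a != 0 -> (a%:M : 'M[R]_n) \in unitmx.
Proof. by move=> a0; rewrite unitmxE det_scalar unitrX // unitfE. Qed.

Lemma sum_ord_eq (R : pzSemiRingType) n x :
  \sum_(i < n) ((i : nat) == x)%:R = (x < n)%:R :> R.
Proof.
case: (ltnP x n) => [xn|nx].
  rewrite (bigD1 (Ordinal xn)) //= eqxx big1 ?addr0 // => i ne.
  suff /negbTE-> : (i : nat) != x by [].
  by apply: contra ne => /eqP e; apply/eqP/val_inj.
by rewrite big1 // => i _; rewrite ltn_eqF // (leq_trans (ltn_ord i)).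
Qed.

Section Assembly.
Variable R : comPzRingType.

Definition assemble (I : finType) m n (G : I -> 'M[R]_(m, n)) (F : I -> 'M[R]_m) : 'M[R]_n :=
  \sum_c (G c)^T *m F c *m G c.

Lemma assembleD (I : finType) m n (G : I -> 'M[R]_(m, n)) (F1 F2 : I -> 'M[R]_m) :
  assemble G (fun c => F1 c + F2 c) = assemble G F1 + assemble G F2.
Proof. by rewrite -big_split; apply: eq_bigr => c _; rewrite mulmxDr mulmxDl. Qed.

Lemma assembleZ (I : finType) m n (G : I -> 'M[R]_(m, n)) a (F : I -> 'M[R]_m) :
  assemble G (fun c => a *: F c) = a *: assemble G F.
Proof. by rewrite scaler_sumr; apply: eq_bigr => c _; rewrite -scalemxAr -scalemxAl. Qed.

Lemma assemble_mulmxr (I : finType) m n (G : I -> 'M[R]_(m, n)) (F : I -> 'M[R]_m)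
    (D : 'M[R]_n) (D' : I -> 'M[R]_m) :
  (forall c, G c *m D = D' c *m G c) ->
  assemble G F *m D = assemble G (fun c => F c *m D' c).
Proof. by move=> GD; rewrite mulmx_suml; apply: eq_bigr => c _; rewrite -mulmxA GD !mulmxA. Qed.

Lemma assemble_block (I : finType) m n (G : I -> 'M[R]_(m, n)) (F1 F2 : I -> 'M[R]_m) :
  block_mx (assemble G F1) (assemble G F2) (assemble G F2) (assemble G F1) =
  assemble (fun c => block_mx (G c) 0 0 (G c)) (fun c => block_mx (F1 c) (F2 c) (F2 c) (F1 c)).
Proof.
rewrite /assemble; elim/big_rec3: _ => [|c y1 y2 y3 _ <-]; first by rewrite block_mx0.
rewrite tr_block_mx !trmx0 !mulmx_block !(mulmx0, mul0mx, addr0, add0r).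
by rewrite add_block_mx.
Qed.

Lemma assemble_tens (I J : finType) m1 n1 m2 n2
    (G1 : I -> 'M[R]_(m1, n1)) (F1 : I -> 'M[R]_m1)
    (G2 : J -> 'M[R]_(m2, n2)) (F2 : J -> 'M[R]_m2) :
  assemble G1 F1 *t assemble G2 F2 =
  assemble (fun c : I * J => G1 c.1 *t G2 c.2) (fun c => F1 c.1 *t F2 c.2).
Proof.
rewrite /assemble tensmx_suml; under eq_bigr do rewrite tensmx_sumr.
by rewrite pair_big; apply: eq_bigr => c _; rewrite trmx_tens !tensmx_mul.
Qed.

Lemma form_assemble (I : finType) m n (G : I -> 'M[R]_(m, n)) (F : I -> 'M[R]_m)
    (u : 'cV[R]_n) :
  u^T *m assemble G F *m u = \sum_c (G c *m u)^T *m F c *m (G c *m u).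
Proof.
by rewrite mulmx_sumr mulmx_suml; apply: eq_bigr => c _; rewrite trmx_mul !mulmxA.
Qed.

End Assembly.

Lemma sum_cells (V : nmodType) (I J K : finType) (F : K * (J * I) -> V) :
  \sum_c F c = \sum_i \sum_j \sum_k F (k, (j, i)).
Proof.
rewrite (eq_bigr (fun c => F (c.1, (c.2.1, c.2.2)))) => [|[? []] //].
rewrite -(pair_bigA _ (fun k p => F (k, (p.1, p.2)))).
under eq_bigr => k _ do rewrite -(pair_bigA _ (fun j i => F (k, (j, i)))).
by rewrite exchange_big; under eq_bigr do rewrite exchange_big; rewrite exchange_big.
Qed.

Section CellGather.
Variable R : pzRingType.

Definition cell_gather n (i : 'I_n) : 'M[R]_(2, n.+1) := rowsub (shift_ord i) 1%:M.

Lemma cell_gatherE n (i : 'I_n) a (x : 'I_n.+1) :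
  cell_gather i a x = ((i + a)%N == x)%:R.
Proof. by rewrite !mxE. Qed.

(* Cells are indexed [(z, (y, x))], like the nodes, so that the restriction
   to the corners of a cell is a Kronecker product of 1D restrictions. *)
Definition cell_gather3 nx ny nz (c : 'I_nz * ('I_ny * 'I_nx)) :
    'M[R]_(Nn 1 1 1, Nn nx ny nz) :=
  cell_gather c.1 *t (cell_gather c.2.1 *t cell_gather c.2.2).

Definition cell_node nx ny nz (c : 'I_nz * ('I_ny * 'I_nx)) (q : 'I_(Nn 1 1 1)) :
    'I_(Nn nx ny nz) :=
  node (shift_ord c.2.2 (node_x q)) (shift_ord c.2.1 (node_y q)) (shift_ord c.1 (node_z q)).

Lemma cell_gather3E nx ny nz (c : 'I_nz * ('I_ny * 'I_nx)) :
  cell_gather3 c = rowsub (cell_node c) 1%:M.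
Proof. by rewrite /cell_gather3 /cell_gather !tensmx_rowsub !tensmx11. Qed.

End CellGather.

Lemma node_xK nx ny nz (x : 'I_nx.+1) (y : 'I_ny.+1) (z : 'I_nz.+1) : node_x (node x y z) = x.
Proof. by rewrite /node_x /node !mxtens_indexK. Qed.

Lemma node_yK nx ny nz (x : 'I_nx.+1) (y : 'I_ny.+1) (z : 'I_nz.+1) : node_y (node x y z) = y.
Proof. by rewrite /node_y /node !mxtens_indexK. Qed.

Lemma node_zK nx ny nz (x : 'I_nx.+1) (y : 'I_ny.+1) (z : 'I_nz.+1) : node_z (node x y z) = z.
Proof. by rewrite /node_z /node !mxtens_indexK. Qed.

Section OneDimensional.
Variable R : realFieldType.

Definition path_lap n : 'M[R]_n.+1 := (Wm R n)^T *m Wm R n.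

Lemma Wm_row n (i : 'I_n) : row i (Wm R n) = Wm R 1 *m cell_gather R i.
Proof.
apply/rowP => x; rewrite !mxE big_ord_recl big_ord1 !cell_gatherE !mxE /= addn0 addn1.
by rewrite sub0r subr0 mul1r mulN1r addrC !(eq_sym (x : nat)).
Qed.

Lemma path_lap_assemble n : path_lap n = assemble (@cell_gather R n) (fun=> path_lap 1).
Proof.
rewrite /path_lap trmx_mul_rows; apply: eq_bigr => i _.
by rewrite Wm_row trmx_mul !mulmxA.
Qed.

Lemma Itil2 : Itil R 2 = 2^-1%:M.
Proof.
rewrite /Itil -diag_const_mx; congr diag_mx.
by apply/rowP => a; rewrite !mxE; case: a => [[|[|]]].
Qed.

Lemma sum_cell_gather_col n (x : 'I_n.+1) :
  \sum_(i < n) \sum_(a < 2) cell_gather R i a x = ((x < n)%N + (0 < x)%N)%:R.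
Proof.
under eq_bigr do rewrite big_ord_recl big_ord1 !cell_gatherE /= addn0 addn1.
rewrite big_split /= natrD sum_ord_eq; congr (_ + _).
case: x => [[|y] /= yn]; first by rewrite big1.
by under eq_bigr do rewrite eqSS; rewrite sum_ord_eq -ltnS yn.
Qed.

Lemma Itil_assemble n :
  (0 < n)%N -> Itil R n.+1 = assemble (@cell_gather R n) (fun=> Itil R 2).
Proof.
move=> n0; apply/matrixP => x y.
have GtG i : ((cell_gather R i)^T *m cell_gather R i) x y =
             (x == y)%:R * \sum_(a < 2) cell_gather R i a x.
  rewrite mxE mulr_sumr; apply: eq_bigr => a _; rewrite !mxE.
  by case: (shift_ord i a =P x) => [->|_]; rewrite ?mulr0n ?mul0r ?mulr0 // mulrC.
rewrite Itil2 summxE.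
under eq_bigr do rewrite mul_mx_scalar -scalemxAl mxE GtG.
rewrite -mulr_sumr -mulr_sumr sum_cell_gather_col !mxE /=.
case: (x == y) => /=; rewrite ?mulr0n ?mulr1n ?mul0r ?mulr0 // mul1r.
have [->|x0] := eqVneq (x : nat) 0%N; first by rewrite n0 /= addn0 mulr1.
have [->|xn] := eqVneq (x : nat) n; first by rewrite ltnn n0 /= add0n mulr1.
by rewrite lt0n x0 ltn_neqAle xn -ltnS ltn_ord /= mulVf // pnatr_eq0.
Qed.

End OneDimensional.

Section CellRestriction.
Variables (R : realFieldType) (nx ny nz : nat).

Lemma cell_gather3_DU (U : 'I_nx.+1 -> 'I_ny.+1 -> 'I_nz.+1 -> R) c :
  cell_gather3 R c *m DU U = DU (U_cell U c.2.2 c.2.1 c.1) *m cell_gather3 R c.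
Proof.
rewrite cell_gather3E /DU rowsub1_mul_diag; congr (diag_mx _ *m _).
by apply/rowP => q; rewrite !mxE /cell_node node_xK node_yK node_zK.
Qed.

Lemma psi_cellE (a b : 'cV[R]_(Nn nx ny nz)) i j k :
  psi_cell a b i j k =
  block_mx (cell_gather3 R (k, (j, i))) 0 0 (cell_gather3 R (k, (j, i))) *m col_mx a b.
Proof.
rewrite mul_block_col !mul0mx addr0 add0r cell_gather3E -!rowsubE.
by congr col_mx; apply/matrixP => q r; rewrite ord1 !mxE.
Qed.

Lemma assemble_tens3 (A : 'M[R]_nz.+1) (B : 'M[R]_ny.+1) (C : 'M[R]_nx.+1)
    (Al Bl Cl : 'M[R]_2) :
  A = assemble (@cell_gather R nz) (fun=> Al) ->
  B = assemble (@cell_gather R ny) (fun=> Bl) ->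
  C = assemble (@cell_gather R nx) (fun=> Cl) ->
  A *t (B *t C) = assemble (@cell_gather3 R nx ny nz) (fun=> Al *t (Bl *t Cl)).
Proof. by move=> -> -> ->; rewrite !assemble_tens. Qed.

End CellRestriction.

Section Region.
Variables (R : realFieldType) (hbar m dx dy dz dt : R).
Hypotheses (dx0 : dx != 0) (dy0 : dy != 0) (dz0 : dz != 0).

Lemma stiffness_tens nx ny nz :
  Dm R nx ny nz *m DS dx dy dz nx ny nz *m invmx (Dl dx dy dz nx ny nz) *m (Dm R nx ny nz)^T =
    (dy * dz / dx) *: (Itil R nz.+1 *t (Itil R ny.+1 *t path_lap R nx))
  + (dx * dz / dy) *: (Itil R nz.+1 *t (path_lap R ny *t Itil R nx.+1))
  + (dx * dy / dz) *: (path_lap R nz *t (Itil R ny.+1 *t Itil R nx.+1)).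
Proof.
have Dl_inv n1 n2 n3 (a b c : R) : a != 0 -> b != 0 -> c != 0 ->
    invmx (block_mx (a%:M : 'M_n1) 0 0 (block_mx (b%:M : 'M_n2) 0 0 (c%:M : 'M_n3))) =
    block_mx a^-1%:M 0 0 (block_mx b^-1%:M 0 0 c^-1%:M).
  move=> a0 b0 c0; rewrite invmx_block_diag ?invmx_block_diag ?invmx_scalar //.
    by rewrite block_diag_mx_unit !unitmx_scalar.
  by rewrite !block_diag_mx_unit !unitmx_scalar.
rewrite /Dl Dl_inv // /DS /Dm !mul_row_block !(mulmx0, mul0mx, addr0, add0r).
rewrite !mul_row_block !(mulmx0, mul0mx, addr0, add0r).
rewrite !tr_row_mx !mul_row_col !mul_mx_scalar /Dxm /Dym /Dzm.
rewrite -!scalemxAr -!scalemxAl !scalerA !linearN /= !mulNmx !scalerN !opprK.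
rewrite !trmx_tens !trmx1 !trmxK !tensmx_mul !mul1mx !mulmx1 addrA /path_lap.
by rewrite [dx^-1 * _]mulrC [dy^-1 * _]mulrC [dz^-1 * _]mulrC.
Qed.

Variables (nx ny nz : nat) (U : 'I_nx.+1 -> 'I_ny.+1 -> 'I_nz.+1 -> R).
Hypotheses (nx0 : (0 < nx)%N) (ny0 : (0 < ny)%N) (nz0 : (0 < nz)%N).

Local Notation G3 := (@cell_gather3 R nx ny nz).

Lemma stiffness_assemble :
  Dm R nx ny nz *m DS dx dy dz nx ny nz *m invmx (Dl dx dy dz nx ny nz) *m (Dm R nx ny nz)^T =
  assemble G3 (fun=> Dm R 1 1 1 *m DS dx dy dz 1 1 1 *m invmx (Dl dx dy dz 1 1 1)
                     *m (Dm R 1 1 1)^T).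
Proof.
have Ix := Itil_assemble R nx0; have Iy := Itil_assemble R ny0; have Iz := Itil_assemble R nz0.
have Lx := path_lap_assemble R nx; have Ly := path_lap_assemble R ny.
have Lz := path_lap_assemble R nz.
rewrite !stiffness_tens (assemble_tens3 Iz Iy Lx) (assemble_tens3 Iz Ly Ix).
by rewrite (assemble_tens3 Lz Iy Ix) -!assembleZ -!assembleD.
Qed.

Lemma DV_assemble : DV dx dy dz nx ny nz = assemble G3 (fun=> DV dx dy dz 1 1 1).
Proof.
have Ix := Itil_assemble R nx0; have Iy := Itil_assemble R ny0; have Iz := Itil_assemble R nz0.
by rewrite /DV (assemble_tens3 Iz Iy Ix) -assembleZ.
Qed.

Lemma Hm_assemble :
  Hm hbar m dx dy dz U = assemble G3 (fun c => Hm hbar m dx dy dz (U_cell U c.2.2 c.2.1 c.1)).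
Proof.
rewrite /Hm stiffness_assemble DV_assemble (assemble_mulmxr _ (cell_gather3_DU U)).
by rewrite -assembleZ -assembleD.
Qed.

Lemma Pm_assemble :
  Pm hbar m dx dy dz dt U =
  assemble (fun c => block_mx (G3 c) 0 0 (G3 c))
           (fun c => Pm hbar m dx dy dz dt (U_cell U c.2.2 c.2.1 c.1)).
Proof. by rewrite /Pm Hm_assemble DV_assemble -assembleZ assemble_block. Qed.

End Region.

Theorem lemma4 (R : realFieldType) (hbar m dx dy dz dt : R) (nx ny nz : nat)
  (Hhbar : 0 < hbar) (Hm : 0 < m) (Hdx : 0 < dx) (Hdy : 0 < dy) (Hdz : 0 < dz)
  (Hdt : 0 < dt) (Hnx : (0 < nx)%N) (Hny : (0 < ny)%N) (Hnz : (0 < nz)%N)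
  (U : 'I_nx.+1 -> 'I_ny.+1 -> 'I_nz.+1 -> R)
  (psiR psiI : 'cV[R]_(Nn nx ny nz)) :
  (col_mx psiR psiI)^T *m Pm hbar m dx dy dz dt U *m col_mx psiR psiI =
  \sum_(i < nx) \sum_(j < ny) \sum_(k < nz)
     ((psi_cell psiR psiI i j k)^T
        *m Pm hbar m dx dy dz dt (U_cell U i j k)
        *m psi_cell psiR psiI i j k).
Proof.
rewrite Pm_assemble ?lt0r_neq0 // form_assemble sum_cells.
by apply: eq_bigr => i _; apply: eq_bigr => j _; apply: eq_bigr => k _; rewrite psi_cellE.
Qed.
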